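(* Let $N\ge 2$, $d\ge1$, and let $\tilde\psi:\mathbb{R}\to\mathbb{R}$ be a positive, bounded, continuous function with $\tilde K:=\|\tilde\psi\|_\infty$. Let $\{t_n\}_{n\in\mathbb{N}_0}$ be an increasing sequence of nonnegative numbers with $t_0=0$, $t_n\to\infty$, and define $\alpha:[0,\infty)\to\{-1,1\}$ by $\alpha(0)=1$, $\alpha(t)=1$ on $(t_{2n},t_{2n+1})$, $\alpha(t)=-1$ on $[t_{2n+1},t_{2n+2}]$, $n\in\mathbb{N}_0$. Assume $t_{2n+2}-t_{2n+1}<\frac{\ln 2}{\tilde K}$ for all $n\in\mathbb{N}_0$, $$\sum_{p=0}^{\infty}\ln\left(\frac{e^{\tilde K(t_{2p+2}-t_{2p+1})}}{2-e^{\tilde K(t_{2p+2}-t_{2p+1})}}\right)<+\infty,$$ $$\sum_{p=0}^{\infty}\ln\left(\max\left\{1-e^{-\tilde K(t_{2p+1}-t_{2p})},\,1-\frac{\tilde\psi_0}{\tilde K}\big(1-e^{-\tilde K(t_{2p+1}-t_{2p})}\big)\right\}\right)=-\infty,$$ where $\tilde\psi_0:=\min_{|y|\le \tilde M^0}\tilde\psi(y)$ and $$\tilde M^0:=e^{\sum_{p=0}^{\infty}\ln\left(\frac{e^{\tilde K(t_{2p+2}-t_{2p+1})}}{2-e^{\tilde K(t_{2p+2}-t_{2p+1})}}\right)}d(0),\qquad d(0)=\max_{i,j}|x_i^0-x_j^0|.$$ Then every solution $\{x_i\}_{i=1,\dots,N}$ of $$\frac{d}{dt}x_i(t)=\frac{1}{N-1}\sum_{j\ne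 i}\alpha(t)\,\tilde\psi(|x_i(t)-x_j(t)|)\,(x_j(t)-x_i(t)),\quad t>0,\qquad x_i(0)=x_i^0\in\mathbb{R}^d,$$ converges to consensus, i.e. $\lim_{t\to\infty}\max_{i,j}|x_i(t)-x_j(t)|=0$.
   Context: $\mathbb{N}_0=\{0,1,2,\dots\}$. A solution is a continuous function that is $C^1$ on each interval $(t_n,t_{n+1})$ and satisfies the equation there. *)

From Stdlib Require Import Reals Lra Lia.
From Coquelicot Require Import Coquelicot.
Open Scope R_scope.

(* vectors of R^d are represented by functions nat -> R, only the
   coordinates k < d being relevant *)

Fixpoint sumR (n : nat) (f : nat -> R) : R :=
  match n with O => 0 | S m => sumR m f + f m end.

(* max_{k<n} f k (0 if n = 0; used only for nonnegative quantities) *)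
Fixpoint maxR (n : nat) (f : nat -> R) : R :=
  match n with O => 0 | S m => Rmax (maxR m f) (f m) end.

Definition vnorm (d : nat) (v : nat -> R) : R :=
  sqrt (sumR d (fun k => (v k) ^ 2)).

Definition vsub (u v : nat -> R) : nat -> R := fun k => u k - v k.

Definition diam (N d : nat) (y : nat -> nat -> R) : R :=
  maxR N (fun i => maxR N (fun j => vnorm d (vsub (y i) (y j)))).

Definition rhs (N d : nat) (a : R) (psi : R -> R) (y : nat -> nat -> R)
  (i k : nat) : R :=
  / (INR N - 1) *
  sumR N (fun j => if Nat.eqb j i then 0
                   else a * psi (vnorm d (vsub (y i) (y j))) * (y j k - y i k)).

(* x : agent -> time -> vector.  Solution in the sense of the paper:
   continuous on [0,oo), C^1 on each (t_n, t_{n+1}) where it satisfies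
   the equation, with the initial datum x0. *)
Definition is_solution (N d : nat) (tt : nat -> R) (alpha : R -> R)
  (psi : R -> R) (x0 : nat -> nat -> R) (x : nat -> R -> nat -> R) : Prop :=
  (forall i k, (i < N)%nat -> (k < d)%nat -> x i 0 k = x0 i k) /\
  (forall i k, (i < N)%nat -> (k < d)%nat -> forall s, 0 <= s ->
     filterlim (fun r => x i r k) (within (fun r => 0 <= r) (locally s))
               (locally (x i s k))) /\
  (forall n i k, (i < N)%nat -> (k < d)%nat -> forall s, tt n < s < tt (S n) ->
     is_derive (fun r => x i r k) s
       (rhs N d (alpha s) psi (fun j => x j s) i k) /\
     continuous (fun r => Derive (fun r' => x i r' k) r) s).

Definition termA (K : R) (tt : nat -> R) (p : nat) : R :=
  let D := tt (2 * p + 2)%nat - tt (2 * p + 1)%nat in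
  ln (exp (K * D) / (2 - exp (K * D))).

Definition termB (K psi0 : R) (tt : nat -> R) (p : nat) : R :=
  let D := tt (2 * p + 1)%nat - tt (2 * p)%nat in
  ln (Rmax (1 - exp (- K * D)) (1 - psi0 / K * (1 - exp (- K * D)))).

From Stdlib Require Import Reals Lra Lia Classical.
From Coquelicot Require Import Coquelicot.
Open Scope R_scope.

(* Let F(t) = max_{i,j} |x_i(t) - x_j(t)|^2.  If the pair (i, j) realizes F(t), every
   agent lies in the slab between the hyperplanes through x_i and x_j orthogonal to
   x_i - x_j, so each term of d/dt |x_i - x_j|^2 has a definite sign: this derivative is
   at most -(2 c / (N - 1)) F while alpha = 1, where c bounds psi from below along the
   pairwise distances, and at most 4 K F while alpha = -1.  A comparison principle for
   the maximum of finitely many functions, through the upper right Dini derivative,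
   turns this into F(t_{2p+1}) <= exp(-(2 c / (N - 1)) (t_{2p+1} - t_{2p})) F(t_{2p})
   and F <= exp(4 K (t_{2p+2} - t_{2p+1})) F(t_{2p+1}).
   As 4 K D <= 2 ln (e^{K D} / (2 - e^{K D})), the first series bounds the total growth
   over the repulsive intervals: F <= e^{2 S} F(0), so every distance stays below M^0
   and c = psi_0 is admissible.  As -2 psi_0 D <= ln max {...}, the divergence of the
   second series makes the total length of the attractive intervals infinite, and F
   tends to 0. *)

(** * Finite sums and maxima *)

Lemma sumR_ext n f g : (forall k, (k < n)%nat -> f k = g k) -> sumR n f = sumR n g.
Proof.
  induction n as [|n IH]; intros H; simpl; [reflexivity|].
  rewrite IH by (intros; apply H; lia); rewrite H by lia; reflexivity.
Qed.

Lemma sumR_le n f g : (forall k, (k < n)%nat -> f k <= g k) -> sumR n f <= sumR n g.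
Proof.
  induction n as [|n IH]; intros H; simpl; [lra|].
  pose proof (H n ltac:(lia)); pose proof (IH (fun k Hk => H k ltac:(lia))); lra.
Qed.

Lemma sumR_plus n f g : sumR n (fun k => f k + g k) = sumR n f + sumR n g.
Proof. induction n as [|n IH]; simpl; [lra|]. rewrite IH; ring. Qed.

Lemma sumR_scal n c f : sumR n (fun k => c * f k) = c * sumR n f.
Proof. induction n as [|n IH]; simpl; [ring|]. rewrite IH; ring. Qed.

Lemma sumR_const n c : sumR n (fun _ => c) = INR n * c.
Proof. induction n as [|n IH]; simpl sumR; [simpl; ring|]. rewrite IH, S_INR; ring. Qed.

Lemma sumR_swap n m (g : nat -> nat -> R) :
  sumR n (fun k => sumR m (fun l => g k l)) = sumR m (fun l => sumR n (fun k => g k l)).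
Proof.
  induction n as [|n IH]; simpl.
  - rewrite sumR_const; simpl; ring.
  - rewrite IH, <- sumR_plus; reflexivity.
Qed.

Lemma sumR_nonneg n f : (forall k, (k < n)%nat -> 0 <= f k) -> 0 <= sumR n f.
Proof.
  intros H; apply Rle_trans with (sumR n (fun _ => 0)); [|apply sumR_le, H].
  rewrite sumR_const; lra.
Qed.

Lemma sumR_le_n m n f : (m <= n)%nat -> (forall k, 0 <= f k) -> sumR m f <= sumR n f.
Proof. intros Hmn Hf; induction Hmn; simpl; [lra|]. pose proof (Hf m0); lra. Qed.

Lemma sumR_le_term n f j :
  (j < n)%nat -> (forall k, (k < n)%nat -> f k <= 0) -> sumR n f <= f j.
Proof.
  induction n as [|n IH]; intros Hj H; [lia|]; simpl.
  destruct (Nat.eq_dec j n) as [->|Hne].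
  - assert (sumR n f <= sumR n (fun _ => 0)) by (apply sumR_le; intros; apply H; lia).
    rewrite sumR_const in H0; lra.
  - pose proof (IH ltac:(lia) (fun k Hk => H k ltac:(lia))); pose proof (H n ltac:(lia)); lra.
Qed.

Lemma sumR_skip_const n i c :
  (i < n)%nat -> sumR n (fun l => if Nat.eqb l i then 0 else c) = (INR n - 1) * c.
Proof.
  induction n as [|n IH]; intros Hi; [lia|]; simpl sumR; rewrite S_INR.
  destruct (Nat.eq_dec i n) as [->|Hne].
  - rewrite Nat.eqb_refl, (sumR_ext n _ (fun _ => c)), sumR_const; [ring|].
    intros k Hk; rewrite (proj2 (Nat.eqb_neq k n)) by lia; reflexivity.
  - rewrite IH by lia; rewrite (proj2 (Nat.eqb_neq n i)) by lia; ring.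
Qed.

Lemma maxR_ge0 n f : 0 <= maxR n f.
Proof.
  induction n as [|n IH]; simpl; [lra|].
  apply Rle_trans with (maxR n f); [exact IH|apply Rmax_l].
Qed.

Lemma maxR_ge n f k : (k < n)%nat -> f k <= maxR n f.
Proof.
  induction n as [|n IH]; intros Hk; [lia|]; simpl.
  destruct (Nat.eq_dec k n) as [->|Hne]; [apply Rmax_r|].
  apply Rle_trans with (maxR n f); [apply IH; lia|apply Rmax_l].
Qed.

Lemma maxR_le n f c : 0 <= c -> (forall k, (k < n)%nat -> f k <= c) -> maxR n f <= c.
Proof.
  induction n as [|n IH]; intros Hc H; simpl; [exact Hc|].
  apply Rmax_lub; [apply IH|]; auto.
Qed.

Lemma maxR_ext n f g : (forall k, (k < n)%nat -> f k = g k) -> maxR n f = maxR n g.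
Proof.
  induction n as [|n IH]; intros H; simpl; [reflexivity|].
  rewrite IH by (intros; apply H; lia); rewrite H by lia; reflexivity.
Qed.

Lemma maxR_mult_r n f c : 0 <= c -> maxR n (fun k => f k * c) = maxR n f * c.
Proof.
  intros Hc; induction n as [|n IH]; simpl; [ring|]; rewrite IH.
  unfold Rmax; destruct (Rle_dec (maxR n f * c) (f n * c)), (Rle_dec (maxR n f) (f n));
    try reflexivity; destruct (Req_dec c 0) as [->|]; try ring; exfalso; nra.
Qed.

Lemma maxR_sqrt n f : (forall k, 0 <= f k) -> maxR n (fun k => sqrt (f k)) = sqrt (maxR n f).
Proof.
  intros Hf; induction n as [|n IH]; simpl; [symmetry; apply sqrt_0|]; rewrite IH.
  pose proof (maxR_ge0 n f); pose proof (Hf n).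
  unfold Rmax; destruct (Rle_dec (sqrt (maxR n f)) (sqrt (f n))) as [Hl|Hl],
    (Rle_dec (maxR n f) (f n)) as [Hl'|Hl']; try reflexivity; exfalso.
  - apply Hl', sqrt_le_0; auto.
  - apply Hl, sqrt_le_1; auto.
Qed.

(** * Configurations of agents *)

Definition dot (d : nat) (u v : nat -> R) : R := sumR d (fun k => u k * v k).

Definition nsq (d : nat) (u : nat -> R) : R := sumR d (fun k => u k ^ 2).

Lemma nsq_ge0 d u : 0 <= nsq d u.
Proof. apply sumR_nonneg; intros; apply pow2_ge_0. Qed.

Lemma nsq_add d u v : nsq d (fun k => u k + v k) = nsq d u + 2 * dot d u v + nsq d v.
Proof. unfold nsq, dot; rewrite <- sumR_scal, <- !sumR_plus; apply sumR_ext; intros; ring. Qed.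

Lemma nsq_vsub_sym d u v : nsq d (vsub u v) = nsq d (vsub v u).
Proof. apply sumR_ext; intros; unfold vsub; ring. Qed.

Lemma nsq_vsub_diag d u : nsq d (vsub u u) = 0.
Proof. unfold nsq, vsub; rewrite (sumR_ext d _ (fun _ => 0)), sumR_const; [ring|intros; ring]. Qed.

Lemma dot_vsub_opp d u v : dot d (vsub u v) (vsub v u) = - nsq d (vsub u v).
Proof.
  unfold dot, nsq; replace (- _) with (-1 * sumR d (fun k => vsub u v k ^ 2)) by ring.
  rewrite <- sumR_scal; apply sumR_ext; intros; unfold vsub; ring.
Qed.

Lemma dot_bounds_of_extremal d u v :
  nsq d (fun k => u k + v k) <= nsq d u -> nsq d v <= nsq d u -> - nsq d u <= dot d u v <= 0.
Proof.
  pose proof (nsq_ge0 d v) as Hv; pose proof (nsq_ge0 d (fun k => u k + v k)) as Huv.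
  rewrite nsq_add in *; lra.
Qed.

Definition sqdiam (N d : nat) (y : nat -> nat -> R) : R :=
  maxR N (fun i => maxR N (fun j => nsq d (vsub (y i) (y j)))).

Lemma diam_sqrt N d y : diam N d y = sqrt (sqdiam N d y).
Proof.
  unfold diam, sqdiam; rewrite <- maxR_sqrt by (intros; apply maxR_ge0).
  apply maxR_ext; intros i _; rewrite <- maxR_sqrt by (intros; apply nsq_ge0); reflexivity.
Qed.

Lemma nsq_le_sqdiam N d y i j :
  (i < N)%nat -> (j < N)%nat -> nsq d (vsub (y i) (y j)) <= sqdiam N d y.
Proof.
  intros Hi Hj; eapply Rle_trans; [|apply (maxR_ge _ _ i Hi)].
  apply (maxR_ge _ (fun j => nsq d (vsub (y i) (y j))) j Hj).
Qed.

Lemma vnorm_le_diam N d y i j :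
  (i < N)%nat -> (j < N)%nat -> vnorm d (vsub (y i) (y j)) <= diam N d y.
Proof. intros Hi Hj; rewrite diam_sqrt; apply sqrt_le_1_alt, nsq_le_sqdiam; assumption. Qed.

Definition force_dot (N d : nat) (psi : R -> R) (y : nat -> nat -> R) (i : nat)
  (u : nat -> R) : R :=
  sumR N (fun l => if Nat.eqb l i then 0
                   else psi (vnorm d (vsub (y i) (y l))) * dot d u (vsub (y l) (y i))).

Lemma dot_rhs N d a psi y i u :
  dot d u (rhs N d a psi y i) = a / (INR N - 1) * force_dot N d psi y i u.
Proof.
  unfold dot, rhs, force_dot.
  transitivity (/ (INR N - 1) * sumR d (fun k => sumR N (fun l => u k *
    (if Nat.eqb l i then 0 else a * psi (vnorm d (vsub (y i) (y l))) * (y l k - y i k))))).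
  { rewrite <- sumR_scal; apply sumR_ext; intros k _; rewrite sumR_scal; ring. }
  rewrite sumR_swap; unfold Rdiv; rewrite (Rmult_comm a), Rmult_assoc, <- (sumR_scal N a).
  f_equal; apply sumR_ext; intros l _; destruct (Nat.eqb l i).
  - rewrite (sumR_ext d _ (fun _ => 0)), sumR_const by (intros; ring); ring.
  - unfold dot, vsub; rewrite <- !sumR_scal; apply sumR_ext; intros; ring.
Qed.

Definition sqdist_rate (N d : nat) (a : R) (psi : R -> R) (y : nat -> nat -> R)
  (i j : nat) : R :=
  2 * a / (INR N - 1) *
  (force_dot N d psi y i (vsub (y i) (y j)) + force_dot N d psi y j (vsub (y j) (y i))).

Lemma sqdist_rate_eq N d a psi y i j :
  sumR d (fun k => 2 * (y i k - y j k) * (rhs N d a psi y i k - rhs N d a psi y j k)) =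
  sqdist_rate N d a psi y i j.
Proof.
  transitivity (2 * dot d (vsub (y i) (y j)) (rhs N d a psi y i) +
                2 * dot d (vsub (y j) (y i)) (rhs N d a psi y j)).
  { unfold dot, vsub; rewrite <- !sumR_scal, <- sumR_plus; apply sumR_ext; intros; ring. }
  rewrite !dot_rhs; unfold sqdist_rate, Rdiv; ring.
Qed.

Section ExtremalPair.

Variables (N d : nat) (y : nat -> nat -> R) (i j : nat).
Hypotheses (Hi : (i < N)%nat) (Hj : (j < N)%nat)
  (Hextr : nsq d (vsub (y i) (y j)) = sqdiam N d y).

(* All agents lie in the slab between the hyperplanes through [y i] and [y j]
   orthogonal to [y i - y j]. *)
Lemma extremal_pair_dot l : (l < N)%nat ->
  - sqdiam N d y <= dot d (vsub (y i) (y j)) (vsub (y l) (y i)) <= 0.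
Proof.
  intros Hl; rewrite <- Hextr; apply dot_bounds_of_extremal; rewrite Hextr.
  - replace (nsq d _) with (nsq d (vsub (y l) (y j)))
      by (apply sumR_ext; intros; unfold vsub; ring).
    apply nsq_le_sqdiam; auto.
  - apply nsq_le_sqdiam; auto.
Qed.

Variable psi : R -> R.
Hypothesis Hpsi : forall z, 0 <= psi z.

Lemma force_dot_extremal_le :
  force_dot N d psi y i (vsub (y i) (y j)) <=
  - psi (vnorm d (vsub (y i) (y j))) * nsq d (vsub (y i) (y j)).
Proof.
  assert (Hterm : forall l, (l < N)%nat ->
    (if Nat.eqb l i then 0
     else psi (vnorm d (vsub (y i) (y l))) * dot d (vsub (y i) (y j)) (vsub (y l) (y i))) <= 0).
  { intros l Hl; destruct (Nat.eqb l i); [lra|].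
    pose proof (extremal_pair_dot l Hl); pose proof (Hpsi (vnorm d (vsub (y i) (y l)))); nra. }
  destruct (Nat.eq_dec j i) as [->|Hji].
  - rewrite nsq_vsub_diag, Rmult_0_r; unfold force_dot.
    apply Rle_trans with (sumR N (fun _ => 0)); [apply sumR_le, Hterm|rewrite sumR_const; lra].
  - eapply Rle_trans; [apply (sumR_le_term _ _ j Hj Hterm)|].
    rewrite (proj2 (Nat.eqb_neq j i) Hji), dot_vsub_opp; lra.
Qed.

Lemma force_dot_extremal_ge K : (forall z, psi z <= K) ->
  - ((INR N - 1) * (K * sqdiam N d y)) <= force_dot N d psi y i (vsub (y i) (y j)).
Proof.
  intros HK; replace (- _) with ((INR N - 1) * - (K * sqdiam N d y)) by ring.
  rewrite <- (sumR_skip_const N i) by exact Hi.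
  apply sumR_le; intros l Hl; destruct (Nat.eqb l i); [lra|].
  assert (0 <= sqdiam N d y) by apply maxR_ge0.
  pose proof (extremal_pair_dot l Hl); pose proof (Hpsi (vnorm d (vsub (y i) (y l)))).
  pose proof (HK (vnorm d (vsub (y i) (y l)))); nra.
Qed.

End ExtremalPair.

Lemma INR_pred_ge1 N : (2 <= N)%nat -> 1 <= INR N - 1.
Proof. intros HN; apply le_INR in HN; simpl in HN; lra. Qed.

Section ExtremalRate.

Variables (N d : nat) (psi : R -> R) (y : nat -> nat -> R) (i j : nat).
Hypotheses (HN : (2 <= N)%nat) (Hi : (i < N)%nat) (Hj : (j < N)%nat)
  (Hextr : nsq d (vsub (y i) (y j)) = sqdiam N d y)
  (Hpsi : forall z, 0 <= psi z).

Let Hextr_sym : nsq d (vsub (y j) (y i)) = sqdiam N d y.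
Proof. rewrite nsq_vsub_sym; exact Hextr. Qed.

Lemma sqdist_rate_repulsive K : (forall z, psi z <= K) ->
  sqdist_rate N d (-1) psi y i j <= 4 * K * nsq d (vsub (y i) (y j)).
Proof.
  intros HK; pose proof (INR_pred_ge1 N HN).
  pose proof (force_dot_extremal_ge N d y i j Hi Hj Hextr psi Hpsi K HK).
  pose proof (force_dot_extremal_ge N d y j i Hj Hi Hextr_sym psi Hpsi K HK).
  unfold sqdist_rate; rewrite Hextr; set (n1 := INR N - 1) in *.
  set (G := force_dot N d psi y i _ + force_dot N d psi y j _).
  assert (Hq : / n1 * (- 2 * (n1 * (K * sqdiam N d y))) <= / n1 * G).
  { apply Rmult_le_compat_l; [left; apply Rinv_0_lt_compat|unfold G]; lra. }
  replace (/ n1 * _) with (- 2 * (K * sqdiam N d y)) in Hq by (field; lra).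
  unfold Rdiv; lra.
Qed.

Lemma sqdist_rate_attractive c : c <= psi (vnorm d (vsub (y i) (y j))) ->
  sqdist_rate N d 1 psi y i j <= - (2 * c / (INR N - 1)) * nsq d (vsub (y i) (y j)).
Proof.
  intros Hc; pose proof (INR_pred_ge1 N HN).
  pose proof (force_dot_extremal_le N d y i j Hi Hj Hextr psi Hpsi).
  pose proof (force_dot_extremal_le N d y j i Hj Hi Hextr_sym psi Hpsi) as Hji.
  pose proof (nsq_ge0 d (vsub (y i) (y j))); pose proof (Hpsi (vnorm d (vsub (y j) (y i)))).
  rewrite (nsq_vsub_sym d (y j) (y i)) in Hji.
  unfold sqdist_rate, Rdiv.
  replace (- (2 * c * / (INR N - 1)) * _)
    with (2 * 1 * / (INR N - 1) * (- c * nsq d (vsub (y i) (y j)))) by ring.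
  apply Rmult_le_compat_l; [apply Rmult_le_pos; [lra|left; apply Rinv_0_lt_compat; lra]|nra].
Qed.

End ExtremalRate.

(** * A comparison principle for maxima of finitely many functions *)

Lemma filterlim_within_eps (f : R -> R) (D : R -> Prop) t e :
  filterlim f (within D (locally t)) (locally (f t)) -> 0 < e ->
  exists del, 0 < del /\ forall u, D u -> Rabs (u - t) < del -> Rabs (f u - f t) < e.
Proof.
  intros Hf He; apply filterlim_locally with (eps := mkposreal e He) in Hf.
  destruct Hf as [del Hdel]; exists del; split; [apply cond_pos|].
  intros u Du Hu; exact (Hdel u Hu Du).
Qed.

Lemma real_induction (s T : R) (P : R -> Prop) :
  s <= T -> P s ->
  (forall t, s <= t < T -> (forall u, s <= u <= t -> P u) ->
     exists del, 0 < del /\ forall u, t < u < t + del -> u <= T -> P u) ->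
  (forall t, s < t <= T -> (forall u, s <= u < t -> P u) -> P t) ->
  forall t, s <= t <= T -> P t.
Proof.
  intros HsT Hs Hstep Hclosed.
  set (E := fun t => s <= t <= T /\ forall u, s <= u <= t -> P u).
  assert (Es : E s) by (split; [lra|]; intros u Hu; replace u with s by lra; exact Hs).
  destruct (completeness E) as [t0 [Hub Hleast]];
    [exists T; intros t [Ht _]; lra|exists s; exact Es|].
  assert (Hst0 : s <= t0) by (apply Hub, Es).
  assert (Ht0T : t0 <= T) by (apply Hleast; intros t [Ht _]; lra).
  assert (Hbelow : forall u, s <= u < t0 -> P u).
  { intros u Hu; destruct (classic (P u)) as [|HPu]; [assumption|exfalso].
    assert (Hubu : is_upper_bound E u).
    { intros t [Ht Hall]; apply Rnot_lt_le; intros Hut; apply HPu, Hall; lra. }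
    specialize (Hleast u Hubu); lra. }
  assert (Et0 : E t0).
  { split; [lra|]; intros u Hu.
    destruct (Rle_lt_or_eq_dec u t0 (proj2 Hu)) as [Hlt| ->]; [apply Hbelow; lra|].
    destruct (Rle_lt_or_eq_dec s t0 Hst0) as [Hlt|<-];
      [apply Hclosed; [lra|exact Hbelow]|exact Hs]. }
  destruct (Rle_lt_or_eq_dec t0 T Ht0T) as [HltT|<-]; [exfalso|intros t Ht; apply Et0; lra].
  destruct (Hstep t0 ltac:(lra) (proj2 Et0)) as [del [Hdel Hright]].
  set (t1 := t0 + Rmin del (T - t0) / 2).
  assert (0 < Rmin del (T - t0)) by (apply Rmin_pos; lra).
  pose proof (Rmin_l del (T - t0)); pose proof (Rmin_r del (T - t0)).
  assert (Et1 : E t1).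
  { split; [unfold t1; lra|]; intros u Hu.
    destruct (Rle_dec u t0); [apply Et0; lra|apply Hright; unfold t1 in Hu; lra]. }
  specialize (Hub t1 Et1); unfold t1 in Hub; lra.
Qed.

(* [D^+ f (t) <= 0], for the upper right Dini derivative [D^+]. *)
Definition dini_nonpos (f : R -> R) (t : R) : Prop :=
  forall e, 0 < e -> exists del, 0 < del /\
    forall u, t < u < t + del -> f u <= f t + e * (u - t).

Lemma dini_nonpos_of_derive f t l : is_derive f t l -> l <= 0 -> dini_nonpos f t.
Proof.
  intros Hf Hl e He; apply is_derive_Reals in Hf.
  destruct (Hf e He) as [del Hdel]; exists del; split; [apply cond_pos|]; intros u Hu.
  specialize (Hdel (u - t) ltac:(lra) ltac:(rewrite Rabs_right; lra)).
  replace (t + (u - t)) with u in Hdel by ring; apply Rabs_def2 in Hdel.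
  assert (Hq : (f u - f t) / (u - t) * (u - t) = f u - f t) by (field; lra).
  assert ((f u - f t) / (u - t) * (u - t) <= e * (u - t)) by (apply Rmult_le_compat_r; lra).
  lra.
Qed.

Lemma dini_nonpos_nonincreasing f s T : s <= T ->
  (forall t, s <= t <= T ->
     filterlim f (within (fun r => s <= r <= T) (locally t)) (locally (f t))) ->
  (forall t, s < t < T -> dini_nonpos f t) -> f T <= f s.
Proof.
  intros HsT Hc Hd; apply Rle_plus_epsilon; intros eps Heps.
  set (e := eps / (1 + (T - s))).
  assert (He : 0 < e) by (unfold e; apply Rdiv_lt_0_compat; lra).
  set (g := fun t => f s + e * (1 + (t - s))).
  replace (f s + eps) with (g T) by (unfold g, e; field; lra).
  apply (real_induction s T (fun t => f t <= g t)); [lra|unfold g; nra| | |lra].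
  - intros t Ht Hle; destruct (Rle_lt_or_eq_dec s t (proj1 Ht)) as [Hst|<-].
    + destruct (Hd t ltac:(lra) e He) as [del [Hdel Hu]]; exists del; split; [exact Hdel|].
      intros u Hu' _; specialize (Hu u Hu'); specialize (Hle t ltac:(lra)); unfold g in *; lra.
    + destruct (filterlim_within_eps f _ s e (Hc s ltac:(lra)) He) as [del [Hdel Hu]].
      exists del; split; [exact Hdel|]; intros u Hu' HuT.
      specialize (Hu u ltac:(lra) ltac:(rewrite Rabs_right; lra)); apply Rabs_def2 in Hu.
      unfold g; nra.
  - intros t Ht Hbelow; apply Rnot_lt_le; intros Hgt.
    destruct (filterlim_within_eps f _ t (f t - g t) (Hc t ltac:(lra)) ltac:(lra))
      as [del [Hdel Hu]].
    set (u := t - Rmin (del / 2) ((t - s) / 2)).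
    assert (0 < Rmin (del / 2) ((t - s) / 2)) by (apply Rmin_pos; lra).
    pose proof (Rmin_l (del / 2) ((t - s) / 2)); pose proof (Rmin_r (del / 2) ((t - s) / 2)).
    specialize (Hu u ltac:(unfold u; lra) ltac:(unfold u; rewrite Rabs_left; lra)).
    specialize (Hbelow u ltac:(unfold u; lra)); apply Rabs_def2 in Hu.
    assert (g u <= g t) by (unfold g, u; nra); lra.
Qed.

Lemma filterlim_Rmax {T : Type} {F : (T -> Prop) -> Prop} {FF : Filter F} (f g : T -> R) a b :
  filterlim f F (locally a) -> filterlim g F (locally b) ->
  filterlim (fun t => Rmax (f t) (g t)) F (locally (Rmax a b)).
Proof.
  intros Hf Hg; apply filterlim_locally; intros eps.
  apply filterlim_locally with (eps := eps) in Hf; apply filterlim_locally with (eps := eps) in Hg.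
  generalize (filter_and _ _ Hf Hg); apply filter_imp; intros t [Hft Hgt].
  change (Rabs (f t - a) < eps) in Hft; change (Rabs (g t - b) < eps) in Hgt.
  change (Rabs (Rmax (f t) (g t) - Rmax a b) < eps).
  apply Rabs_def2 in Hft; apply Rabs_def2 in Hgt; apply Rabs_def1;
    unfold Rmax; destruct (Rle_dec (f t) (g t)), (Rle_dec a b); lra.
Qed.

Lemma filterlim_maxR {T : Type} {F : (T -> Prop) -> Prop} {FF : Filter F} n
  (f : nat -> T -> R) (l : nat -> R) :
  (forall k, (k < n)%nat -> filterlim (f k) F (locally (l k))) ->
  filterlim (fun t => maxR n (fun k => f k t)) F (locally (maxR n l)).
Proof.
  induction n as [|n IH]; intros H; simpl; [apply filterlim_const|].
  apply filterlim_Rmax; [apply IH; intros; apply H|apply H]; lia.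
Qed.

Lemma right_delta_finite n t (Q : nat -> R -> Prop) :
  (forall k, (k < n)%nat -> exists del, 0 < del /\ forall u, t < u < t + del -> Q k u) ->
  exists del, 0 < del /\ forall k, (k < n)%nat -> forall u, t < u < t + del -> Q k u.
Proof.
  induction n as [|n IH]; intros H; [exists 1; split; [lra|intros; lia]|].
  destruct IH as [d1 [Hd1 H1]]; [intros; apply H; lia|].
  destruct (H n ltac:(lia)) as [d2 [Hd2 H2]].
  exists (Rmin d1 d2); split; [apply Rmin_pos; assumption|].
  pose proof (Rmin_l d1 d2); pose proof (Rmin_r d1 d2); intros k Hk u Hu.
  destruct (Nat.eq_dec k n) as [->|]; [apply H2; lra|apply H1; [lia|lra]].
Qed.

(* Only the functions realizing the maximum at [t] matter; the others stay
   strictly below it for a while, by continuity. *)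
Lemma dini_nonpos_maxR n (f : nat -> R -> R) t :
  (forall k, (k < n)%nat -> continuous (f k) t) ->
  (forall k, (k < n)%nat -> f k t = maxR n (fun k => f k t) -> dini_nonpos (f k) t) ->
  dini_nonpos (fun r => maxR n (fun k => f k r)) t.
Proof.
  intros Hc Hd e He; set (M := maxR n (fun k => f k t)).
  destruct (right_delta_finite n t (fun k u => f k u <= M + e * (u - t))) as [del [Hdel Hall]].
  - intros k Hk; destruct (Rle_lt_or_eq_dec _ _ (maxR_ge n (fun k => f k t) k Hk)) as [Hlt|Heq].
    + destruct (filterlim_within_eps (f k) (fun _ => True) t (M - f k t)
        (filterlim_filter_le_1 _ (filter_le_within _) (Hc k Hk)) ltac:(unfold M; lra))
        as [del [Hdel Hu]].
      exists del; split; [exact Hdel|]; intros u Hu'.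
      specialize (Hu u I ltac:(rewrite Rabs_right; lra)); apply Rabs_def2 in Hu; nra.
    + destruct (Hd k Hk Heq e He) as [del [Hdel Hu]]; exists del; split; [exact Hdel|].
      intros u Hu'; unfold M; rewrite <- Heq; exact (Hu u Hu').
  - exists del; split; [exact Hdel|]; intros u Hu.
    apply maxR_le; [pose proof (maxR_ge0 n (fun k => f k t)); unfold M; nra|].
    intros k Hk; apply Hall; assumption.
Qed.

Definition cont_derive_on (s T : R) (h h' : R -> R) : Prop :=
  (forall t, s <= t <= T ->
     filterlim h (within (fun r => s <= r <= T) (locally t)) (locally (h t))) /\
  (forall t, s < t < T -> is_derive h t (h' t)).

Lemma cont_derive_on_mult_exp s T h h' r : cont_derive_on s T h h' ->
  cont_derive_on s T (fun t => h t * exp (- r * (t - s)))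
                 (fun t => (h' t - r * h t) * exp (- r * (t - s))).
Proof.
  intros [Hc Hd]; split.
  - intros t Ht; eapply (filterlim_comp_2 h (fun t => exp (- r * (t - s))) Rmult); [auto| |].
    + apply (filterlim_filter_le_1 _ (filter_le_within _)),
        (@ex_derive_continuous R_AbsRing R_NormedModule); auto_derive; trivial.
    + apply (filterlim_mult (K := R_AbsRing)).
  - intros t Ht.
    replace ((h' t - r * h t) * exp (- r * (t - s)))
      with (h' t * exp (- r * (t - s)) + h t * (- r * exp (- r * (t - s)))) by ring.
    apply (is_derive_mult h (fun t => exp (- r * (t - s)))); [auto| |apply Rmult_comm].
    auto_derive; [trivial|rewrite Rmult_1_r; reflexivity].
Qed.

Definition pairmax (N : nat) (h : nat -> nat -> R -> R) (t : R) : R :=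
  maxR N (fun i => maxR N (fun j => h i j t)).

Lemma pairmax_nonincreasing N (h h' : nat -> nat -> R -> R) s T : s <= T ->
  (forall i j, (i < N)%nat -> (j < N)%nat -> cont_derive_on s T (h i j) (h' i j)) ->
  (forall i j, (i < N)%nat -> (j < N)%nat -> forall t, s < t < T ->
     h i j t = pairmax N h t -> h' i j t <= 0) ->
  pairmax N h T <= pairmax N h s.
Proof.
  intros HsT Hcd Hact; apply dini_nonpos_nonincreasing; [exact HsT| |].
  - intros t Ht; unfold pairmax; apply filterlim_maxR; intros i Hi.
    apply filterlim_maxR; intros j Hj; apply Hcd; auto.
  - intros t Ht.
    assert (Hc : forall i j, (i < N)%nat -> (j < N)%nat -> continuous (h i j) t)
      by (intros i j Hi Hj; apply (@ex_derive_continuous R_AbsRing R_NormedModule);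
          exists (h' i j t); apply Hcd; auto).
    apply dini_nonpos_maxR.
    + intros i Hi; apply filterlim_maxR; intros j Hj; apply Hc; auto.
    + intros i Hi Hmax_i; apply dini_nonpos_maxR; [intros j Hj; apply Hc; auto|].
      intros j Hj Hmax_j; apply (dini_nonpos_of_derive _ _ (h' i j t)); [apply Hcd; auto|].
      apply Hact; auto; rewrite Hmax_j; exact Hmax_i.
Qed.

Lemma pairmax_growth N (h h' : nat -> nat -> R -> R) s T r : s <= T ->
  (forall i j, (i < N)%nat -> (j < N)%nat -> cont_derive_on s T (h i j) (h' i j)) ->
  (forall i j, (i < N)%nat -> (j < N)%nat -> forall t, s < t < T ->
     h i j t = pairmax N h t -> h' i j t <= r * h i j t) ->
  pairmax N h T <= pairmax N h s * exp (r * (T - s)).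
Proof.
  intros HsT Hcd Hact; set (w := fun t => exp (- r * (t - s))).
  assert (Hw : forall t, pairmax N (fun i j t => h i j t * w t) t = pairmax N h t * w t).
  { intros t; unfold pairmax; rewrite <- maxR_mult_r by (left; apply exp_pos).
    apply maxR_ext; intros i _; apply maxR_mult_r; left; apply exp_pos. }
  assert (Hdec : pairmax N (fun i j t => h i j t * w t) T <=
                 pairmax N (fun i j t => h i j t * w t) s).
  { apply (pairmax_nonincreasing _ _ (fun i j t => (h' i j t - r * h i j t) * w t) _ _ HsT).
    - intros i j Hi Hj; apply cont_derive_on_mult_exp, Hcd; auto.
    - intros i j Hi Hj t Ht Heq; rewrite Hw in Heq.
      apply Rmult_eq_reg_r in Heq; [|apply Rgt_not_eq, exp_pos].
      specialize (Hact i j Hi Hj t Ht Heq); assert (0 < w t) by apply exp_pos; nra. }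
  rewrite !Hw in Hdec; unfold w in Hdec.
  replace (- r * (s - s)) with 0 in Hdec by ring; rewrite exp_0, Rmult_1_r in Hdec.
  apply (Rmult_le_compat_r (exp (r * (T - s)))) in Hdec; [|left; apply exp_pos].
  rewrite Rmult_assoc, <- exp_plus in Hdec.
  replace (- r * (T - s) + r * (T - s)) with 0 in Hdec by ring.
  rewrite exp_0, Rmult_1_r in Hdec; exact Hdec.
Qed.

(** * Squared distances along a solution *)

Lemma filterlim_sumR {T : Type} {F : (T -> Prop) -> Prop} {FF : Filter F} n
  (f : nat -> T -> R) (l : nat -> R) :
  (forall k, (k < n)%nat -> filterlim (f k) F (locally (l k))) ->
  filterlim (fun t => sumR n (fun k => f k t)) F (locally (sumR n l)).
Proof.
  induction n as [|n IH]; intros H; simpl; [apply filterlim_const|].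
  eapply filterlim_comp_2; [apply IH; intros; apply H; lia|apply H; lia|].
  apply (filterlim_plus (V := R_NormedModule)).
Qed.

Lemma filterlim_Rminus {T : Type} {F : (T -> Prop) -> Prop} {FF : Filter F} (f g : T -> R) a b :
  filterlim f F (locally a) -> filterlim g F (locally b) ->
  filterlim (fun t => f t - g t) F (locally (a - b)).
Proof.
  intros Hf Hg; eapply (filterlim_comp_2 f (fun t => - g t) Rplus Hf).
  - eapply filterlim_comp; [exact Hg|apply (filterlim_opp (V := R_NormedModule))].
  - apply (filterlim_plus (V := R_NormedModule)).
Qed.

Lemma filter_le_within_sub {T : Type} {F : (T -> Prop) -> Prop} {FF : Filter F}
  (A B : T -> Prop) : (forall r, B r -> A r) -> filter_le (within B F) (within A F).
Proof.
  intros HBA P HP; unfold within in *; apply filter_imp with (2 := HP).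
  intros r H Hb; apply H, HBA, Hb.
Qed.

Lemma is_derive_sumR n (f : nat -> R -> R) t (l : nat -> R) :
  (forall k, (k < n)%nat -> is_derive (f k) t (l k)) ->
  is_derive (fun r => sumR n (fun k => f k r)) t (sumR n l).
Proof.
  induction n as [|n IH]; intros H; simpl; [apply (is_derive_const 0)|].
  apply (is_derive_plus (fun r => sumR n (fun k => f k r)) (f n));
    [apply IH; intros|]; apply H; lia.
Qed.

Definition sqdist (d : nat) (x : nat -> R -> nat -> R) (i j : nat) (t : R) : R :=
  nsq d (vsub (x i t) (x j t)).

Section Solution.

Variables (N d : nat) (tt : nat -> R) (alpha psi : R -> R) (x0 : nat -> nat -> R)
  (x : nat -> R -> nat -> R).
Hypotheses (HN : (2 <= N)%nat) (Hsol : is_solution N d tt alpha psi x0 x)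
  (Hpsi : forall z, 0 <= psi z)
  (Hattr : forall n s, tt (2 * n)%nat < s < tt (2 * n + 1)%nat -> alpha s = 1)
  (Hrep : forall n s, tt (2 * n + 1)%nat <= s <= tt (2 * n + 2)%nat -> alpha s = -1).

Lemma sqdiam_at_0 : sqdiam N d (fun m => x m 0) = sqdiam N d x0.
Proof.
  destruct Hsol as [Hinit _]; apply maxR_ext; intros i Hi; apply maxR_ext; intros j Hj.
  apply sumR_ext; intros k Hk; unfold vsub; rewrite !Hinit; auto.
Qed.

Lemma sqdist_cont_derive i j n s T : (i < N)%nat -> (j < N)%nat ->
  0 <= s -> tt n <= s -> T <= tt (S n) ->
  cont_derive_on s T (sqdist d x i j)
    (fun t => sqdist_rate N d (alpha t) psi (fun m => x m t) i j).
Proof.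
  destruct Hsol as [_ [Hcont Hder]]; intros Hi Hj Hs0 Hs HT; split.
  - intros t Ht.
    assert (Hsub : filter_le (within (fun r => s <= r <= T) (locally t))
                             (within (fun r => 0 <= r) (locally t)))
      by (apply filter_le_within_sub; intros; lra).
    apply filterlim_sumR; intros k Hk; eapply (filterlim_comp _ _ _ _ (fun z => z ^ 2)).
    + apply filterlim_Rminus; apply (filterlim_filter_le_1 _ Hsub), Hcont; auto; lra.
    + apply (@ex_derive_continuous R_AbsRing R_NormedModule); auto_derive; trivial.
  - intros t Ht; rewrite <- sqdist_rate_eq; apply is_derive_sumR; intros k Hk.
    destruct (Hder n i k Hi Hk t ltac:(lra)) as [Hdi _].
    destruct (Hder n j k Hj Hk t ltac:(lra)) as [Hdj _].
    pose proof (is_derive_pow _ 2 t _ (is_derive_minus _ _ t _ _ Hdi Hdj)) as Hsq.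
    unfold vsub; simpl in Hsq |- *; unfold minus, plus, opp in Hsq; simpl in Hsq.
    replace (2 * _ * _) with (2 * (rhs N d (alpha t) psi (fun m => x m t) i k +
      - rhs N d (alpha t) psi (fun m => x m t) j k) * ((x i t k + - x j t k) * 1)) by ring.
    exact Hsq.
Qed.

Lemma repulsive_growth K p s T : (forall z, psi z <= K) -> 0 <= s ->
  tt (2 * p + 1)%nat <= s -> s <= T -> T <= tt (2 * p + 2)%nat ->
  sqdiam N d (fun m => x m T) <= sqdiam N d (fun m => x m s) * exp (4 * K * (T - s)).
Proof.
  intros HK Hs0 Hs HsT HT.
  apply (pairmax_growth N (sqdist d x)
           (fun i j t => sqdist_rate N d (alpha t) psi (fun m => x m t) i j) s T _ HsT).
  - intros i j Hi Hj; apply (sqdist_cont_derive i j (2 * p + 1)); auto.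
    replace (S (2 * p + 1)) with (2 * p + 2)%nat by lia; exact HT.
  - intros i j Hi Hj t Ht Hmax; rewrite (Hrep p t) by lra.
    apply sqdist_rate_repulsive; auto.
Qed.

Lemma attractive_decay c p s T :
  (forall t, s < t < T -> forall i j, (i < N)%nat -> (j < N)%nat ->
     c <= psi (vnorm d (vsub (x i t) (x j t)))) ->
  0 <= s -> tt (2 * p)%nat <= s -> s <= T -> T <= tt (2 * p + 1)%nat ->
  sqdiam N d (fun m => x m T) <=
  sqdiam N d (fun m => x m s) * exp (- (2 * c / (INR N - 1)) * (T - s)).
Proof.
  intros Hc Hs0 Hs HsT HT.
  apply (pairmax_growth N (sqdist d x)
           (fun i j t => sqdist_rate N d (alpha t) psi (fun m => x m t) i j) s T _ HsT).
  - intros i j Hi Hj; apply (sqdist_cont_derive i j (2 * p)); auto.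
    replace (S (2 * p)) with (2 * p + 1)%nat by lia; exact HT.
  - intros i j Hi Hj t Ht Hmax; rewrite (Hattr p t) by lra.
    apply sqdist_rate_attractive; auto.
Qed.

End Solution.

Lemma exp_le a b : a <= b -> exp a <= exp b.
Proof. intros [Hlt| ->]; [left; apply exp_increasing, Hlt|right; reflexivity]. Qed.

Lemma ln_ratio_ge z : 0 <= z < ln 2 -> 2 * z <= ln (exp z / (2 - exp z)).
Proof.
  intros Hz; set (E := exp z).
  assert (HE1 : 1 <= E) by (pose proof (exp_ineq1_le z); unfold E; lra).
  assert (HE2 : E < 2) by (unfold E; rewrite <- (exp_ln 2) by lra; apply exp_increasing; lra).
  replace (2 * z) with (ln (E * E)) by (unfold E; rewrite <- exp_plus, ln_exp; ring).
  apply ln_le; [nra|].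
  apply (Rmult_le_reg_r (2 - E)); [lra|].
  replace (E / (2 - E) * (2 - E)) with E by (field; lra).
  pose proof (Rmult_le_pos E ((E - 1) * (E - 1)) ltac:(lra) ltac:(nra)); nra.
Qed.

Lemma ln_max_ge c K D : 0 < c <= K -> 0 <= D ->
  - 2 * c * D <= ln (Rmax (1 - exp (- K * D)) (1 - c / K * (1 - exp (- K * D)))).
Proof.
  intros Hc HD; set (z := 1 - exp (- K * D)); set (y := c / K * z).
  assert (Hz : 0 <= z <= K * D).
  { pose proof (exp_ineq1_le (- K * D)); pose proof (exp_le (- K * D) 0 ltac:(nra)).
    rewrite exp_0 in *; unfold z; lra. }
  assert (Hz1 : z < 1) by (pose proof (exp_pos (- K * D)); unfold z; lra).
  assert (HcK : 0 < c / K <= 1).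
  { split; [apply Rdiv_lt_0_compat; lra|apply (Rmult_le_reg_r K); [lra|]].
    replace (c / K * K) with c by (field; lra); lra. }
  assert (Hy : 0 <= y <= z) by (unfold y; nra).
  assert (HyD : y <= c * D).
  { unfold y; replace (c * D) with (c / K * (K * D)) by (field; lra).
    apply Rmult_le_compat_l; lra. }
  pose proof (Rmax_l z (1 - y)) as Hmz; pose proof (Rmax_r z (1 - y)) as Hmy.
  set (m := Rmax z (1 - y)) in *.
  assert (Hm : 1 / 2 <= m) by lra.
  assert (Hln : 1 - / m <= ln m).
  { pose proof (exp_ineq1_le (- ln m)) as Hexp; rewrite exp_Ropp, exp_ln in Hexp by lra; lra. }
  assert (- 2 * y <= 1 - / m).
  { replace (1 - / m) with ((m - 1) / m) by (field; lra).
    apply (Rmult_le_reg_r m); [lra|].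
    replace ((m - 1) / m * m) with (m - 1) by (field; lra); nra. }
  lra.
Qed.

Lemma sum_n_sumR a n : sum_n a n = sumR (S n) a.
Proof.
  induction n as [|n IH]; [rewrite sum_O; simpl; lra|].
  rewrite sum_Sn, IH; reflexivity.
Qed.

Lemma sumR_le_Series a : (forall n, 0 <= a n) -> ex_series a -> forall p, sumR (S p) a <= Series a.
Proof.
  intros Ha Hex p; rewrite <- sum_n_sumR.
  apply is_lim_seq_incr_compare; [exact (Series_correct a Hex)|].
  intros n; rewrite sum_Sn; pose proof (Ha (S n)); simpl; unfold plus; simpl; lra.
Qed.

Lemma sumR_p_infty_of_lower (g u : nat -> R) c : 0 < c ->
  (forall p, - c * g p <= u p) -> is_lim_seq (sum_n u) m_infty ->
  is_lim_seq (fun n => sumR n g) p_infty.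
Proof.
  intros Hc Hgu Hu; apply is_lim_seq_spec; apply is_lim_seq_spec in Hu; intros M.
  destruct (Hu (- c * M)) as [N0 HN0]; exists (S N0); intros [|n] Hn; [lia|].
  specialize (HN0 n ltac:(lia)); rewrite sum_n_sumR in HN0.
  assert (- c * sumR (S n) g <= sumR (S n) u)
    by (rewrite <- sumR_scal; apply sumR_le; intros; apply Hgu).
  nra.
Qed.

Lemma is_lim_0_of_envelope (T : nat -> R) (G : R -> R) C (S : nat -> R) :
  (forall t, 0 <= G t) -> is_lim_seq S p_infty ->
  (forall P t, T P <= t -> G t <= C * exp (- S P)) -> is_lim G p_infty 0.
Proof.
  intros HG HS Henv; apply is_lim_spec; intros eps.
  pose proof (cond_pos eps) as Heps; pose proof (Rabs_pos C) as HC.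
  set (L := ln ((Rabs C + 1) / eps)).
  apply is_lim_seq_spec in HS; destruct (HS L) as [P HP]; specialize (HP P (le_n P)).
  exists (T P); intros t Ht; rewrite Rminus_0_r, Rabs_pos_eq by apply HG.
  assert (Hexp : (Rabs C + 1) * exp (- S P) < eps).
  { replace (pos eps) with ((Rabs C + 1) * exp (- L))
      by (unfold L; rewrite exp_Ropp, exp_ln by (apply Rdiv_lt_0_compat; lra); field; lra).
    apply Rmult_lt_compat_l, exp_increasing; lra. }
  pose proof (Henv P t ltac:(lra)); pose proof (Rle_abs C); pose proof (exp_pos (- S P)); nra.
Qed.

(** * Alternating growth and decay *)

Section Envelope.

Variables (tt : nat -> R) (F : R -> R) (a b : nat -> R) (Sa : R).
Hypotheses (Ht0 : tt 0%nat = 0) (Hinc : forall n, tt n < tt (S n))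
  (Hinf : is_lim_seq tt p_infty)
  (Ha : forall p, 0 <= a p) (Hb : forall p, 0 <= b p) (HF : forall t, 0 <= F t)
  (HSa : forall p, sumR (S p) a <= Sa)
  (Hmono : forall p t, tt (2 * p)%nat <= t <= tt (2 * p + 1)%nat -> F t <= F (tt (2 * p)%nat))
  (Hdecay : forall p, F (tt (2 * p + 1)%nat) <= F (tt (2 * p)%nat) * exp (- b p))
  (Hgrowth : forall p t, tt (2 * p + 1)%nat <= t <= tt (2 * p + 2)%nat ->
     F t <= F (tt (2 * p + 1)%nat) * exp (a p)).

Lemma tt_le m n : (m <= n)%nat -> tt m <= tt n.
Proof. induction 1; [lra|]; pose proof (Hinc m0); lra. Qed.

Lemma period_cover P t : tt (2 * P)%nat <= t ->
  exists p, (P <= p)%nat /\ tt (2 * p)%nat <= t <= tt (2 * p + 2)%nat.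
Proof.
  intros Ht; apply is_lim_seq_spec in Hinf; destruct (Hinf t) as [M HM].
  assert (Hexists : exists p, tt (2 * p)%nat <= t < tt (2 * p + 2)%nat).
  { specialize (HM (2 * M)%nat ltac:(lia)); clear Hinf; induction M as [|M IH].
    - pose proof (tt_le 0 (2 * P) ltac:(lia)); simpl in HM; lra.
    - destruct (Rlt_dec t (tt (2 * M)%nat)) as [Hlt|Hge]; [apply IH, Hlt|].
      exists M; replace (2 * M + 2)%nat with (2 * S M)%nat by lia; lra. }
  destruct Hexists as [p Hp]; exists p; split; [|lra].
  destruct (Nat.le_gt_cases P p) as [|Hlt]; [assumption|exfalso].
  pose proof (tt_le (2 * p + 2) (2 * P) ltac:(lia)); lra.
Qed.

Lemma envelope_grid p : F (tt (2 * p)%nat) <= F 0 * exp (sumR p a - sumR p b).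
Proof.
  induction p as [|p IH]; [simpl; rewrite Ht0, Rminus_0_r, exp_0; lra|].
  replace (2 * S p)%nat with (2 * p + 2)%nat by lia.
  eapply Rle_trans; [apply (Hgrowth p); split; [apply tt_le; lia|lra]|].
  eapply Rle_trans; [apply Rmult_le_compat_r; [left; apply exp_pos|apply (Hdecay p)]|].
  eapply Rle_trans; [apply Rmult_le_compat_r; [left; apply exp_pos|]|].
  { apply Rmult_le_compat_r; [left; apply exp_pos|exact IH]. }
  rewrite !Rmult_assoc, <- !exp_plus; simpl; right; f_equal; f_equal; ring.
Qed.

Lemma envelope_period p t : tt (2 * p)%nat <= t <= tt (2 * p + 2)%nat ->
  F t <= F 0 * exp (sumR (S p) a - sumR p b).
Proof.
  intros Ht; pose proof (HF 0); pose proof (Ha p); pose proof (Hb p); simpl sumR.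
  destruct (Rle_dec t (tt (2 * p + 1)%nat)) as [Hle|Hgt].
  - eapply Rle_trans; [apply (Hmono p); lra|]; eapply Rle_trans; [apply envelope_grid|].
    apply Rmult_le_compat_l, exp_le; lra.
  - eapply Rle_trans; [apply (Hgrowth p); lra|].
    eapply Rle_trans; [apply Rmult_le_compat_r; [left; apply exp_pos|apply (Hdecay p)]|].
    eapply Rle_trans; [apply Rmult_le_compat_r; [left; apply exp_pos|]|].
    { apply Rmult_le_compat_r; [left; apply exp_pos|apply envelope_grid]. }
    rewrite !Rmult_assoc, <- !exp_plus; apply Rmult_le_compat_l, exp_le; lra.
Qed.

Lemma envelope P t : tt (2 * P)%nat <= t -> F t <= F 0 * exp (Sa - sumR P b).
Proof.
  intros Ht; destruct (period_cover P t Ht) as [p [HPp Hp]].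
  eapply Rle_trans; [apply (envelope_period p t Hp)|].
  apply Rmult_le_compat_l, exp_le; [apply HF|].
  pose proof (HSa p); pose proof (sumR_le_n P p b HPp Hb); lra.
Qed.

End Envelope.

(** * Consensus *)

Section Consensus.

Variables (N d : nat) (psi : R -> R) (K : R) (tt : nat -> R) (alpha : R -> R)
  (x0 : nat -> nat -> R) (psi0 : R) (x : nat -> R -> nat -> R).
Hypotheses (HN : (2 <= N)%nat) (Hpos : forall y, 0 < psi y)
  (HK : is_lub (fun r => exists y, r = Rabs (psi y)) K)
  (Ht0 : tt 0%nat = 0) (Hinc : forall n, tt n < tt (S n)) (Hinf : is_lim_seq tt p_infty)
  (Ha1 : forall n s, tt (2 * n)%nat < s < tt (2 * n + 1)%nat -> alpha s = 1)
  (Ha2 : forall n s, tt (2 * n + 1)%nat <= s <= tt (2 * n + 2)%nat -> alpha s = -1)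
  (Hgap : forall n, tt (2 * n + 2)%nat - tt (2 * n + 1)%nat < ln 2 / K)
  (HA : ex_series (termA K tt))
  (Hpsi0 : (exists y, Rabs y <= exp (Series (termA K tt)) * diam N d x0 /\ psi y = psi0)
           /\ (forall y, Rabs y <= exp (Series (termA K tt)) * diam N d x0 -> psi0 <= psi y))
  (HB : is_lim_seq (sum_n (termB K psi0 tt)) m_infty)
  (Hsol : is_solution N d tt alpha psi x0 x).

Let Hpsi_nonneg : forall z, 0 <= psi z.
Proof. intros z; left; apply Hpos. Qed.

Let Htt_nonneg : forall n, 0 <= tt n.
Proof. intros n; rewrite <- Ht0; apply (tt_le tt Hinc); lia. Qed.

Lemma psi_le_lub z : psi z <= K.
Proof. rewrite <- (Rabs_pos_eq (psi z)) by apply Hpsi_nonneg; apply HK; exists z; reflexivity. Qed.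

Lemma psi0_bounds : 0 < psi0 <= K.
Proof. destruct Hpsi0 as [[y [_ <-]] _]; split; [apply Hpos|apply psi_le_lub]. Qed.

Lemma repulsive_len_le_termA p :
  2 * (K * (tt (2 * p + 2)%nat - tt (2 * p + 1)%nat)) <= termA K tt p.
Proof.
  pose proof psi0_bounds as HK0; pose proof (Hgap p) as Hlen.
  pose proof (tt_le tt Hinc (2 * p + 1) (2 * p + 2) ltac:(lia)).
  apply ln_ratio_ge; split; [apply Rmult_le_pos; lra|].
  apply (Rmult_lt_compat_l K) in Hlen; [|lra].
  replace (K * (ln 2 / K)) with (ln 2) in Hlen by (field; lra); exact Hlen.
Qed.

Lemma termA_nonneg p : 0 <= termA K tt p.
Proof.
  pose proof psi0_bounds; pose proof (repulsive_len_le_termA p).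
  pose proof (tt_le tt Hinc (2 * p + 1) (2 * p + 2) ltac:(lia)); nra.
Qed.

Lemma repulsive_step p t : tt (2 * p + 1)%nat <= t <= tt (2 * p + 2)%nat ->
  sqdiam N d (fun m => x m t) <=
  sqdiam N d (fun m => x m (tt (2 * p + 1)%nat)) * exp (2 * termA K tt p).
Proof.
  intros Ht; pose proof psi0_bounds; pose proof (repulsive_len_le_termA p).
  eapply Rle_trans; [apply (repulsive_growth N d tt alpha psi x0 x HN Hsol Hpsi_nonneg Ha2 K p
    (tt (2 * p + 1)%nat) t psi_le_lub (Htt_nonneg _)); lra|].
  apply Rmult_le_compat_l; [apply maxR_ge0|apply exp_le; nra].
Qed.

Lemma attractive_step c p s :
  (forall t, tt (2 * p)%nat < t < tt (2 * p + 1)%nat -> forall i j, (i < N)%nat -> (j < N)%nat ->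
     c <= psi (vnorm d (vsub (x i t) (x j t)))) ->
  tt (2 * p)%nat <= s <= tt (2 * p + 1)%nat ->
  sqdiam N d (fun m => x m s) <=
  sqdiam N d (fun m => x m (tt (2 * p)%nat)) * exp (- (2 * c / (INR N - 1)) * (s - tt (2 * p)%nat)).
Proof.
  intros Hc Hs; apply (attractive_decay N d tt alpha psi x0 x HN Hsol Hpsi_nonneg Ha1 c p
    (tt (2 * p)%nat) s); try apply Htt_nonneg; try lra.
  intros t Ht; apply Hc; lra.
Qed.

Lemma attractive_nonincreasing p s : tt (2 * p)%nat <= s <= tt (2 * p + 1)%nat ->
  sqdiam N d (fun m => x m s) <= sqdiam N d (fun m => x m (tt (2 * p)%nat)).
Proof.
  intros Hs; eapply Rle_trans;
    [apply (attractive_step 0 p s); [intros; apply Hpsi_nonneg|exact Hs]|].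
  replace (- (2 * 0 / (INR N - 1)) * _) with 0 by (field; pose proof (INR_pred_ge1 N HN); lra).
  rewrite exp_0, Rmult_1_r; apply Rle_refl.
Qed.

Lemma sqdiam_bounded t : 0 <= t ->
  sqdiam N d (fun m => x m t) <= sqdiam N d x0 * exp (2 * Series (termA K tt)).
Proof.
  intros Ht; rewrite <- (sqdiam_at_0 N d tt alpha psi x0 x Hsol).
  replace (2 * _) with (2 * Series (termA K tt) - sumR 0 (fun _ => 0)) by (simpl; ring).
  apply (envelope tt (fun t => sqdiam N d (fun m => x m t)) (fun p => 2 * termA K tt p) (fun _ => 0)
    _ Ht0 Hinc Hinf) with (P := 0%nat).
  - intros p; pose proof (termA_nonneg p); lra.
  - intros; lra.
  - intros; apply maxR_ge0.
  - intros p; rewrite sumR_scal.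
    apply Rmult_le_compat_l, sumR_le_Series; auto using termA_nonneg; lra.
  - apply attractive_nonincreasing.
  - intros p; rewrite Ropp_0, exp_0, Rmult_1_r; apply attractive_nonincreasing.
    pose proof (tt_le tt Hinc (2 * p) (2 * p + 1) ltac:(lia)); lra.
  - apply repulsive_step.
  - simpl; lra.
Qed.

Lemma psi_ge_psi0 t i j : 0 <= t -> (i < N)%nat -> (j < N)%nat ->
  psi0 <= psi (vnorm d (vsub (x i t) (x j t))).
Proof.
  intros Ht Hi Hj; apply Hpsi0; rewrite Rabs_pos_eq by apply sqrt_pos.
  eapply Rle_trans; [apply (vnorm_le_diam N d (fun m => x m t)); assumption|].
  rewrite !diam_sqrt; set (SA := Series (termA K tt)).
  apply Rle_trans with (sqrt (sqdiam N d x0 * exp (2 * SA)));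
    [apply sqrt_le_1_alt, sqdiam_bounded, Ht|].
  replace (2 * SA) with (SA + SA) by ring.
  rewrite sqrt_mult_alt, exp_plus, sqrt_square by (apply maxR_ge0 || (left; apply exp_pos)).
  rewrite Rmult_comm; apply Rle_refl.
Qed.

Lemma sqdiam_decay P t : tt (2 * P)%nat <= t ->
  sqdiam N d (fun m => x m t) <= sqdiam N d x0 * exp (2 * Series (termA K tt)) *
    exp (- sumR P (fun p => 2 * psi0 / (INR N - 1) * (tt (2 * p + 1)%nat - tt (2 * p)%nat))).
Proof.
  intros Ht; pose proof psi0_bounds; pose proof (INR_pred_ge1 N HN).
  rewrite Rmult_assoc, <- exp_plus, <- (sqdiam_at_0 N d tt alpha psi x0 x Hsol).
  apply (envelope tt (fun t => sqdiam N d (fun m => x m t)) (fun p => 2 * termA K tt p)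
    (fun p => 2 * psi0 / (INR N - 1) * (tt (2 * p + 1)%nat - tt (2 * p)%nat)) _ Ht0 Hinc Hinf).
  - intros p; pose proof (termA_nonneg p); lra.
  - intros p; pose proof (tt_le tt Hinc (2 * p) (2 * p + 1) ltac:(lia)).
    apply Rmult_le_pos; [apply Rmult_le_pos; [lra|left; apply Rinv_0_lt_compat]|]; lra.
  - intros; apply maxR_ge0.
  - intros p; rewrite sumR_scal.
    apply Rmult_le_compat_l, sumR_le_Series; auto using termA_nonneg; lra.
  - apply attractive_nonincreasing.
  - intros p; rewrite Ropp_mult_distr_l; apply attractive_step.
    + intros s Hs i j Hi Hj; apply psi_ge_psi0; auto; pose proof (Htt_nonneg (2 * p)); lra.
    + pose proof (tt_le tt Hinc (2 * p) (2 * p + 1) ltac:(lia)); lra.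
  - apply repulsive_step.
  - exact Ht.
Qed.

Lemma attractive_time_divergent :
  is_lim_seq (fun P => sumR P (fun p =>
    2 * psi0 / (INR N - 1) * (tt (2 * p + 1)%nat - tt (2 * p)%nat))) p_infty.
Proof.
  pose proof psi0_bounds; pose proof (INR_pred_ge1 N HN).
  apply (sumR_p_infty_of_lower _ (termB K psi0 tt) (INR N - 1)); [lra| |exact HB].
  intros p; unfold termB; cbv zeta.
  replace (- (INR N - 1) * _) with (- 2 * psi0 * (tt (2 * p + 1)%nat - tt (2 * p)%nat))
    by (field; lra).
  apply ln_max_ge; [lra|pose proof (tt_le tt Hinc (2 * p) (2 * p + 1) ltac:(lia)); lra].
Qed.

End Consensus.

Theorem theorem5p1
  (N d : nat) (HN : (2 <= N)%nat) (Hd : (1 <= d)%nat)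
  (psi : R -> R) (K : R)
  (Hpos : forall y, 0 < psi y)
  (Hbdd : exists B, forall y, Rabs (psi y) <= B)
  (Hcont : forall y, continuous psi y)
  (HK : is_lub (fun r => exists y, r = Rabs (psi y)) K)
  (tt : nat -> R)
  (Ht0 : tt 0%nat = 0)
  (Hinc : forall n, tt n < tt (S n))
  (Hinf : is_lim_seq tt p_infty)
  (alpha : R -> R)
  (Ha0 : alpha 0 = 1)
  (Ha1 : forall n s, tt (2 * n)%nat < s < tt (2 * n + 1)%nat -> alpha s = 1)
  (Ha2 : forall n s, tt (2 * n + 1)%nat <= s <= tt (2 * n + 2)%nat -> alpha s = -1)
  (Hgap : forall n, tt (2 * n + 2)%nat - tt (2 * n + 1)%nat < ln 2 / K)
  (HA : ex_series (termA K tt))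
  (x0 : nat -> nat -> R)
  (psi0 : R)
  (Hpsi0 : (exists y, Rabs y <= exp (Series (termA K tt)) * diam N d x0 /\ psi y = psi0)
           /\ (forall y, Rabs y <= exp (Series (termA K tt)) * diam N d x0 -> psi0 <= psi y))
  (HB : is_lim_seq (sum_n (termB K psi0 tt)) m_infty)
  (x : nat -> R -> nat -> R)
  (Hsol : is_solution N d tt alpha psi x0 x) :
  is_lim (fun s => diam N d (fun i => x i s)) p_infty 0.
Proof.
  apply (is_lim_ext (fun t => sqrt (sqdiam N d (fun i => x i t))));
    [intros; symmetry; apply diam_sqrt|].
  rewrite <- sqrt_0; apply is_lim_comp_continuous;
    [|apply continuity_pt_filterlim, continuity_pt_sqrt; lra].
  eapply (is_lim_0_of_envelope (fun P => tt (2 * P)%nat)); [intros; apply maxR_ge0| |].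
  - eapply attractive_time_divergent; eassumption.
  - intros P t Ht; eapply sqdiam_decay; eassumption.
Qed.
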